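(* Let $X$ be a continuous vector field on $\mathbb{S}^1$ with support function $\phi_X$, and let $\eta\in\mathbb{D}^2$. Then $\mathcal{E}_X^-$ (resp. $\mathcal{E}_X^+$) is continuous at $\eta$ if and only if $\Sigma^-(\eta)$ (resp. $\Sigma^+(\eta)$) consists of a single point, i.e. there is a unique support plane of $\mathrm{epi}^+(\phi_X^-)$ at $(\eta,\phi_X^-(\eta))$ (resp. of $\mathrm{epi}^-(\phi_X^+)$ at $(\eta,\phi_X^+(\eta))$).
   Context: $\mathbb{R}^{1,2}$ is $\mathbb{R}^3$ with $\langle x,y\rangle=-x_0y_0+x_1y_1+x_2y_2$; $\Pi(x_0,x_1,x_2)=(x_1/x_0,x_2/x_0)$; $\mathbb{D}^2$ is the open unit disk with boundary $\mathbb{S}^1$. Minkowski cross product: $\langle x\boxtimes y,v\rangle=\det(x,y,v)$. A vector field $X$ on $\mathbb{S}^1$ is $X(z)=iz\phi_X(z)$. $\phi_X^-(\eta)=\sup\{a(\eta):a\text{ affine},a|_{\mathbb{S}^1}\le\phi_X\}$, $\phi_X^+(\eta)=\inf\{a(\eta):a\text{ affine},a|_{\mathbb{S}^1}\ge\phi_X\}$; $\mathrm{epi}^+(\phi_X^-)=\{(\eta,t):t\ge\phi_X^-(\eta)\}$, $\mathrm{epi}^-(\phi_X^+)=\{(\eta,t):t\le\phi_X^+(\eta)\}$. Support planes at points over $\mathbb{D}^2$ are the planes $t=\langle(1,\xi),\sigma\rangle$ with $\sigma\in\Sigma^\pm(\eta)$, where $\Sigma^-(\eta)$ is the set of $\sigma\in\mathbb{R}^{1,2}$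 with $\langle(1,\xi),\sigma\rangle\le\phi_X^-(\xi)$ for all $\xi\in\mathbb{D}^2$ and equality at $\xi=\eta$, and $\Sigma^+(\eta)$ likewise with $\ge\phi_X^+$; each is a point or a compact segment. $\mathcal{E}_X^\pm(\eta)=\mathrm{d}_{(1,\eta)}\Pi((1,\eta)\boxtimes\sigma^\pm(\eta))$ with $\sigma^\pm(\eta)$ the point or midpoint of $\Sigma^\pm(\eta)$. *)

From HB Require Import structures.
From mathcomp Require Import all_boot all_order all_algebra.
From mathcomp Require Import all_classical all_reals topology normedtype.
Set Implicit Arguments. Unset Strict Implicit. Unset Printing Implicit Defensive.
Import Order.TTheory GRing.Theory Num.Theory.
Import numFieldNormedType.Exports.
Local Open Scope ring_scope.
Local Open Scope classical_set_scope.

Section Defs.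
Variable R : realType.

(* points of R^2 and of R^{1,2} *)
Local Notation pt := (R * R)%type.
Local Notation v3 := (R * R * R)%type.

Definition disk : set pt := [set xi | xi.1 ^+ 2 + xi.2 ^+ 2 < 1].
Definition circle : set pt := [set z | z.1 ^+ 2 + z.2 ^+ 2 = 1].

Definition mink (x y : v3) : R :=
  - (x.1.1 * y.1.1) + x.1.2 * y.1.2 + x.2 * y.2.

Definition lift1 (xi : pt) : v3 := (1, xi.1, xi.2).

(* Minkowski cross product, characterized by <x [x] y, v> = det(x, y, v) *)
Definition mcross (x y : v3) : v3 :=
  (- (x.1.2 * y.2 - x.2 * y.1.2),
     x.2 * y.1.1 - x.1.1 * y.2,
     x.1.1 * y.1.2 - x.1.2 * y.1.1).

(* Pi (x0,x1,x2) = (x1/x0, x2/x0) and its differential at (1, eta) *)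
Definition Pi (x : v3) : pt := (x.1.2 / x.1.1, x.2 / x.1.1).
Definition dPi (eta : pt) (v : v3) : pt :=
  (v.1.2 - eta.1 * v.1.1, v.2 - eta.2 * v.1.1).

Definition affine : set (pt -> R) :=
  [set a | exists c b1 b2 : R, a = fun xi => c + b1 * xi.1 + b2 * xi.2].

Definition phi_minus (phi : pt -> R) (eta : pt) : R :=
  sup [set a eta | a in [set a | affine a /\ forall z, circle z -> a z <= phi z]].
Definition phi_plus (phi : pt -> R) (eta : pt) : R :=
  inf [set a eta | a in [set a | affine a /\ forall z, circle z -> phi z <= a z]].

Definition Sigma_minus (phi : pt -> R) (eta : pt) : set v3 :=
  [set s | (forall xi, disk xi -> mink (lift1 xi) s <= phi_minus phi xi)
           /\ mink (lift1 eta) s = phi_minus phi eta].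
Definition Sigma_plus (phi : pt -> R) (eta : pt) : set v3 :=
  [set s | (forall xi, disk xi -> phi_plus phi xi <= mink (lift1 xi) s)
           /\ mink (lift1 eta) s = phi_plus phi eta].

Definition v3comb (t : R) (a b : v3) : v3 :=
  ((1 - t) * a.1.1 + t * b.1.1, (1 - t) * a.1.2 + t * b.1.2,
   (1 - t) * a.2 + t * b.2).
Definition segment (a b : v3) : set v3 :=
  [set v3comb t a b | t in [set t : R | 0 <= t <= 1]].

(* the point, or midpoint of the segment, S (junk value if S is neither) *)
Definition midpt (S : set v3) : v3 :=
  let p := xget ((0, 0, 0) : v3 * v3)%R [set p : v3 * v3 | S = segment p.1 p.2] in
  v3comb (2^-1) p.1 p.2.

Definition sigma_minus (phi : pt -> R) (eta : pt) : v3 := midpt (Sigma_minus phi eta).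
Definition sigma_plus (phi : pt -> R) (eta : pt) : v3 := midpt (Sigma_plus phi eta).

Definition E_minus (phi : pt -> R) (eta : pt) : pt :=
  dPi eta (mcross (lift1 eta) (sigma_minus phi eta)).
Definition E_plus (phi : pt -> R) (eta : pt) : pt :=
  dPi eta (mcross (lift1 eta) (sigma_plus phi eta)).

(* vector field X on S^1 with support function phi: X(z) = i z phi(z) *)
Definition is_support_function (X : pt -> pt) (phi : pt -> R) : Prop :=
  forall z, circle z -> X z = (- z.2 * phi z, z.1 * phi z).

End Defs.

From HB Require Import structures.
From mathcomp Require Import all_boot all_order all_algebra.
From mathcomp Require Import all_classical all_reals topology normedtype.
From mathcomp Require Import derive ring lra.
Import Order.TTheory GRing.Theory Num.Theory.
Import numFieldNormedType.Exports.
Set Implicit Arguments. Unset Strict Implicit. Unset Printing Implicit Defensive.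
Local Open Scope ring_scope.
Local Open Scope classical_set_scope.

(* The function [phi_minus g] is the supremum of the affine functions lying
   below [g] on the circle, so the support planes at an interior point [eta]
   are exactly those affine minorants that touch [phi_minus g] at [eta].  Any
   three of them have collinear gradients (otherwise raising their centroid
   slightly gives a minorant above [phi_minus g eta]), and they form a compact
   convex set: a point or a segment.
   If it is a point, every cluster value of the chosen support plane
   [sigma_minus g xi] as [xi -> eta] is a support plane at [eta], so
   [sigma_minus g] and hence [E_minus g] are continuous at [eta].  If it is a
   segment [[a, b]], put [n = grad a - grad b].  Support planes at
   [eta + s n], [s > 0], have [n]-slope at least that of [a], whereas
   [sigma_minus g eta] is the midpoint; the identity
   [n ^ E = (1 - |xi|^2) (n . grad sigma) + phi(xi) (n . xi)] turns this gap
   into a jump of [E_minus g].  The case of [E_plus] is the case of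
   [E_minus] for [- g]. *)

Section SupportPlanes.
Variable R : realType.
Local Notation pt := (R * R)%type.
Local Notation v3 := (R * R * R)%type.

Definition plane (s : v3) (x : pt) : R := - s.1.1 + x.1 * s.1.2 + x.2 * s.2.
Definition normsq (x : pt) : R := x.1 ^+ 2 + x.2 ^+ 2.
Definition slope (s : v3) : R := Num.sqrt (s.1.2 ^+ 2 + s.2 ^+ 2).

Lemma mink_lift1 (s : v3) (x : pt) : mink (lift1 x) s = plane s x.
Proof. by rewrite /mink /lift1 /plane /= mul1r. Qed.

Definition v3line (s d : v3) (t : R) : v3 :=
  (s.1.1 + t * d.1.1, s.1.2 + t * d.1.2, s.2 + t * d.2).

Lemma plane_line (s d : v3) (t : R) (x : pt) :
  plane (v3line s d t) x = plane s x + t * plane d x.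
Proof. rewrite /plane /=; ring. Qed.

Lemma planeN (s : v3) (x : pt) : plane (- s) x = - plane s x.
Proof. rewrite /plane /=; ring. Qed.

Lemma plane_comb (t : R) (a b : v3) (x : pt) :
  plane (v3comb t a b) x = (1 - t) * plane a x + t * plane b x.
Proof. rewrite /plane /v3comb /=; ring. Qed.

Lemma plane_shift (s : v3) (x y : pt) :
  plane s y = plane s x + ((y.1 - x.1) * s.1.2 + (y.2 - x.2) * s.2).
Proof. rewrite /plane; ring. Qed.

Lemma planeB (a b : v3) (x : pt) : plane (a - b) x = plane a x - plane b x.
Proof. rewrite /plane /=; ring. Qed.

Lemma v3_eq (a b : v3) : a.1.1 = b.1.1 -> a.1.2 = b.1.2 -> a.2 = b.2 -> a = b.
Proof. by case: a => [[? ?] ?]; case: b => [[? ?] ?] /= -> -> ->. Qed.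

Lemma normsq_ge0 (x : pt) : 0 <= normsq x.
Proof. by rewrite addr_ge0 ?sqr_ge0. Qed.

Lemma slope_ge0 (s : v3) : 0 <= slope s.
Proof. exact: sqrtr_ge0. Qed.

Lemma slope_sqr (s : v3) : slope s ^+ 2 = s.1.2 ^+ 2 + s.2 ^+ 2.
Proof. by rewrite sqr_sqrtr // addr_ge0 ?sqr_ge0. Qed.

Lemma grad_le_slope (s : v3) : `|s.1.2| <= slope s /\ `|s.2| <= slope s.
Proof.
have := slope_sqr s; have := slope_ge0 s.
by split; rewrite ler_norml; apply/andP; split; nra.
Qed.

Lemma dot_le_slope (x : pt) (s : v3) :
  x.1 * s.1.2 + x.2 * s.2 <= Num.sqrt (normsq x) * slope s.
Proof.
have r2 : Num.sqrt (normsq x) ^+ 2 = normsq x by rewrite sqr_sqrtr ?normsq_ge0.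
have := mulr_ge0 (sqrtr_ge0 (normsq x)) (slope_ge0 s).
have := sqr_ge0 (x.1 * s.2 - x.2 * s.1.2).
move: r2 (slope_sqr s); rewrite /normsq; nra.
Qed.

Lemma dot_le_slope1 (x : pt) (s : v3) :
  normsq x <= 1 -> x.1 * s.1.2 + x.2 * s.2 <= slope s.
Proof.
move=> hx; rewrite (le_trans (dot_le_slope x s)) // ler_piMl ?slope_ge0 //.
by rewrite -sqrtr1 ler_sqrt.
Qed.

Lemma mulr_le_norm (d y K : R) : `|y| <= K -> d * y <= `|d| * K.
Proof. by move=> hy; rewrite (le_trans (ler_norm _)) // normrM ler_wpM2l. Qed.

Lemma le0_of_scaled_le (d K : R) :
  (forall r, 0 <= r < 1 -> r * d <= (1 - r) * K) -> d <= 0.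
Proof.
move=> H; rewrite leNgt; apply/negP => d0.
set k := `|K| + 1; have kK : K < k by rewrite /k; have := ler_norm K; lra.
have kd0 : 0 < k + d by have := normr_ge0 K; rewrite /k; lra.
set r := k / (k + d); have rkd : r * (k + d) = k by rewrite mulfVK ?gt_eqF.
have r0 : 0 <= r by rewrite divr_ge0 //; have := normr_ge0 K; rewrite /k; lra.
have r1 : r < 1 by rewrite ltr_pdivrMr // mul1r; lra.
have := H r; rewrite r0 r1 => /(_ isT) h.
have : r * d * (k + d) <= (1 - r) * K * (k + d) by rewrite ler_pM2r.
nra.
Qed.

Definition box (K : R) : set v3 :=
  [set s | `|s.1.1| <= K /\ `|s.1.2| <= K /\ `|s.2| <= K].

Lemma compact_box (K : R) : compact (box K).
Proof.
have -> : box K = `[- K, K] `*` `[- K, K] `*` `[- K, K].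
  apply/seteqP; split => s; rewrite /box /= !in_itv /= -!ler_norml.
    by move=> [? [? ?]].
  by move=> [[? ?] ?].
by apply: compact_setX; first apply: compact_setX; exact: segment_compact.
Qed.

Lemma cluster_closed_in {T : topologicalType} (F : set_system T) (A : set T) (p : T) :
  cluster F p -> F A -> closed A -> A p.
Proof. by rewrite clusterE => hp FA /closure_id ->; exact: hp. Qed.

Lemma continuous_v3_1 : continuous (fun s : v3 => s.1.1).
Proof. by move=> s; apply: (cvg_comp _ _ cvg_fst); exact: cvg_fst. Qed.
Lemma continuous_v3_2 : continuous (fun s : v3 => s.1.2).
Proof. by move=> s; apply: (cvg_comp _ _ cvg_fst); exact: cvg_snd. Qed.
Lemma continuous_v3_3 : continuous (fun s : v3 => s.2).
Proof. by move=> s; exact: cvg_snd. Qed.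

Lemma continuous_pt_1 : continuous (fun x : pt => x.1).
Proof. by move=> x; exact: cvg_fst. Qed.
Lemma continuous_pt_2 : continuous (fun x : pt => x.2).
Proof. by move=> x; exact: cvg_snd. Qed.

Lemma cvg_dPi_mcross {T : Type} (F : set_system T) {FF : Filter F}
    (u : T -> pt) (f : T -> v3) (x : pt) (s : v3) : u @ F --> x -> f @ F --> s ->
  (fun t => dPi (u t) (mcross (lift1 (u t)) (f t))) @ F --> dPi x (mcross (lift1 x) s).
Proof.
move=> ux fs; have a1 := cvg_comp u _ ux (@continuous_pt_1 x).
have a2 := cvg_comp u _ ux (@continuous_pt_2 x).
have c1 := cvg_comp f _ fs (@continuous_v3_1 s).
have c2 := cvg_comp f _ fs (@continuous_v3_2 s).
have c3 := cvg_comp f _ fs (@continuous_v3_3 s).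
have := cvg_pair
  (cvgB (cvgB (cvgM a2 c1) (@cvgMl_tmp _ _ _ _ _ 1 _ c3))
        (cvgM a1 (cvgN (cvgB (cvgM a1 c3) (cvgM a2 c2)))))
  (cvgB (cvgB (@cvgMl_tmp _ _ _ _ _ 1 _ c2) (cvgM a1 c1))
        (cvgM a2 (cvgN (cvgB (cvgM a1 c3) (cvgM a2 c2))))).
by apply.
Qed.

Lemma continuous_normsq : continuous normsq.
Proof.
move=> x; have a1 := @continuous_pt_1 x; have a2 := @continuous_pt_2 x.
rewrite /normsq /continuous_at; under eq_fun do rewrite !expr2.
by have := cvgD (cvgM a1 a1) (cvgM a2 a2); apply.
Qed.

Lemma near_dist1_lt (x : pt) (c e : R) : 0 < e ->
  \forall y \near x, c * (`|y.1 - x.1| + `|y.2 - x.2|) < e.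
Proof.
move=> e0; have h : (fun y : pt => c * (`|y.1 - x.1| + `|y.2 - x.2|)) @ x -->
    c * (`|x.1 - x.1| + `|x.2 - x.2|).
  by apply: cvgMl_tmp; apply: cvgD; apply: cvg_norm; apply: cvgB;
    [exact: continuous_pt_1 | exact: cvg_cst | exact: continuous_pt_2 | exact: cvg_cst].
by apply: (cvgr_lt _ h e); rewrite !subrr normr0 addr0 mulr0.
Qed.

Lemma continuous_plane (z : pt) : continuous (plane ^~ z).
Proof.
move=> s; have := cvgD (cvgD (cvgN (@continuous_v3_1 s))
  (@cvgMl_tmp _ _ _ _ _ z.1 _ (@continuous_v3_2 s)))
  (@cvgMl_tmp _ _ _ _ _ z.2 _ (@continuous_v3_3 s)); apply.
Qed.

Lemma closed_plane_le (z : pt) (c : R) : closed [set s | plane s z <= c].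
Proof.
have := preimage_closed (f := plane ^~ z) _ (@closed_le _ c); apply => s _.
exact: continuous_plane.
Qed.

Lemma closed_plane_ge (z : pt) (c : R) : closed [set s | c <= plane s z].
Proof.
have := preimage_closed (f := plane ^~ z) _ (@closed_ge _ c); apply => s _.
exact: continuous_plane.
Qed.

Lemma plane_diff_le_box (K : R) (s : v3) (x y : pt) : box K s ->
  `|plane s y - plane s x| <= K * (`|y.1 - x.1| + `|y.2 - x.2|).
Proof.
move=> [_ [b2 b3]]; rewrite (plane_shift s x y) addrC addKr.
rewrite (le_trans (ler_normD _ _)) // !normrM mulrDr.
by apply: lerD; rewrite [K * _]mulrC ler_wpM2l.
Qed.

Lemma nbhs_box (K : R) (s : v3) : box K s -> nbhs s (box (K + 1)).
Proof.
move=> [b1 [b2 b3]].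
have near_lt (f : v3 -> R) : continuous f -> `|f s| <= K -> \forall t \near s, `|f t| < K + 1.
  move=> cf fK; have : (fun t => `|f t|) @ s --> `|f s| by apply: cvg_norm; exact: cf.
  by move/cvgr_lt => /(_ (K + 1)); apply; lra.
near=> t; split; [|split]; apply: ltW; near: t; apply: near_lt => //.
- exact: continuous_v3_1.
- exact: continuous_v3_2.
- exact: continuous_v3_3.
Unshelve. all: by end_near.
Qed.

Lemma cvg_box_cluster {T : Type} (F : set_system T) {PF : ProperFilter F}
    (f : T -> v3) (K : R) (s0 : v3) :
  (\forall t \near F, box K (f t)) -> (forall p, cluster (f @ F) p -> p = s0) ->
  f @ F --> s0.
Proof.
move=> FB clu; have [p [Bp hp]] := @compact_box K (f @ F) _ FB.
rewrite (clu p hp) in Bp.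
apply: (@compact_cluster_set1 _ s0 (f @ F) (box (K + 1))).
- exact: norm_hausdorff.
- exact: compact_box.
- exact: nbhs_box.
- by apply: filterS FB => t [b1 [b2 b3]]; split; [|split]; lra.
- by apply/seteqP; split=> [q /clu|_ ->] //; rewrite -(clu p hp).
Qed.

Lemma box_dot_le (K n1 n2 : R) (t : v3) : box K t ->
  `|n1 * t.1.2 + n2 * t.2| <= (`|n1| + `|n2|) * K.
Proof.
move=> [_ [b2 b3]]; rewrite (le_trans (ler_normD _ _)) // !normrM mulrDl.
by apply: lerD; apply: ler_wpM2l.
Qed.

Lemma dPi_mcross_cross (x : pt) (s : v3) (n1 n2 : R) :
  n1 * (dPi x (mcross (lift1 x) s)).2 - n2 * (dPi x (mcross (lift1 x) s)).1 =
  (1 - normsq x) * (n1 * s.1.2 + n2 * s.2) + plane s x * (n1 * x.1 + n2 * x.2).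
Proof. rewrite /dPi /mcross /lift1 /normsq /plane /=; ring. Qed.

Lemma dPi_mcrossN (x : pt) (s : v3) :
  dPi x (mcross (lift1 x) (- s)) = - dPi x (mcross (lift1 x) s).
Proof.
rewrite /dPi /mcross /lift1 /=.
have -> : forall a b : R, - ((a, b) : pt) = (- a, - b) by [].
by congr pair; ring.
Qed.

Lemma cvg_line (x : pt) (n1 n2 : R) :
  (fun t : R => (x.1 + t * n1, x.2 + t * n2)) @ (0 : R) --> x.
Proof.
have lin (a n : R) : (fun t : R => a + t * n) @ (0 : R) --> a.
  have : (fun t : R => a + t * n) @ (0 : R) --> a + 0 * n.
    by apply: cvgD; [exact: cvg_cst | apply: cvgMr_tmp; exact: cvg_id].
  by rewrite mul0r addr0.
by case: x => x1 x2; have := cvg_pair (lin x1 n1) (lin x2 n2); apply.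
Qed.

Definition raised_centroid (s1 s2 s3 : v3) (de : R) : v3 :=
  ((s1.1.1 + s2.1.1 + s3.1.1) / 3 - de, (s1.1.2 + s2.1.2 + s3.1.2) / 3,
   (s1.2 + s2.2 + s3.2) / 3).

Lemma plane_raised_centroid (s1 s2 s3 : v3) (de : R) (y : pt) :
  plane (raised_centroid s1 s2 s3 de) y = (plane s1 y + plane s2 y + plane s3 y) / 3 + de.
Proof. by rewrite /plane /=; field. Qed.

Definition grad_det (s1 s2 s3 : v3) : R :=
  (s2.1.2 - s1.1.2) * (s3.2 - s1.2) - (s2.2 - s1.2) * (s3.1.2 - s1.1.2).

Definition grad_spread (s1 s2 s3 : v3) : R :=
  (s2.1.2 - s1.1.2) ^+ 2 + (s2.2 - s1.2) ^+ 2 + (s3.1.2 - s1.1.2) ^+ 2 + (s3.2 - s1.2) ^+ 2.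

Lemma grad_spread_ge0 (s1 s2 s3 : v3) : 0 <= grad_spread s1 s2 s3.
Proof. by rewrite /grad_spread !addr_ge0 ?sqr_ge0. Qed.

(* Cramer's rule recovers [(v1, v2)] from its products with [(d1, d2)] and
   [(f1, f2)], which the hypotheses bound by [6 * de]. *)
Lemma centroid_gap (d1 d2 f1 f2 v1 v2 de : R) :
  - ((d1 * v1 + d2 * v2) + (f1 * v1 + f2 * v2)) / 3 < de ->
  (2 * (d1 * v1 + d2 * v2) - (f1 * v1 + f2 * v2)) / 3 < de ->
  (2 * (f1 * v1 + f2 * v2) - (d1 * v1 + d2 * v2)) / 3 < de ->
  (d1 * f2 - d2 * f1) ^+ 2 * (v1 ^+ 2 + v2 ^+ 2) <=
  288 * de ^+ 2 * (d1 ^+ 2 + d2 ^+ 2 + f1 ^+ 2 + f2 ^+ 2).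
Proof.
set al := d1 * v1 + d2 * v2; set be := f1 * v1 + f2 * v2 => h1 h2 h3.
have al2 : al ^+ 2 <= 36 * de ^+ 2.
  have [] : - (6 * de) < al /\ al < 6 * de by split; lra.
  nra.
have be2 : be ^+ 2 <= 36 * de ^+ 2.
  have [] : - (6 * de) < be /\ be < 6 * de by split; lra.
  nra.
set D := d1 * f2 - d2 * f1.
have i1 : D * v1 = al * f2 - be * d2 by rewrite /D /al /be; ring.
have i2 : D * v2 = be * d1 - al * f1 by rewrite /D /al /be; ring.
have j1 : (D * v1) ^+ 2 <= 2 * (al ^+ 2 * f2 ^+ 2 + be ^+ 2 * d2 ^+ 2).
  by rewrite i1; have := sqr_ge0 (al * f2 + be * d2); nra.
have j2 : (D * v2) ^+ 2 <= 2 * (be ^+ 2 * d1 ^+ 2 + al ^+ 2 * f1 ^+ 2).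
  by rewrite i2; have := sqr_ge0 (be * d1 + al * f1); nra.
have := sqr_ge0 d1; have := sqr_ge0 d2; have := sqr_ge0 f1; have := sqr_ge0 f2.
move: j1 j2; rewrite !exprMn; nra.
Qed.

Lemma circle_dist_ge (z x : pt) : circle z ->
  (1 - Num.sqrt (normsq x)) ^+ 2 <= (z.1 - x.1) ^+ 2 + (z.2 - x.2) ^+ 2.
Proof.
rewrite /circle => cz.
have r0 : 0 <= Num.sqrt (normsq x) := sqrtr_ge0 _.
have r2 : Num.sqrt (normsq x) ^+ 2 = normsq x by rewrite sqr_sqrtr ?normsq_ge0.
have zx : (z.1 * x.1 + z.2 * x.2) ^+ 2 <= Num.sqrt (normsq x) ^+ 2.
  have id : (z.1 * x.1 + z.2 * x.2) ^+ 2 + (z.1 * x.2 - z.2 * x.1) ^+ 2 =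
    (z.1 ^+ 2 + z.2 ^+ 2) * normsq x by rewrite /normsq; ring.
  by rewrite r2; have := sqr_ge0 (z.1 * x.2 - z.2 * x.1); rewrite cz mul1r in id; lra.
have {}zx : z.1 * x.1 + z.2 * x.2 <= Num.sqrt (normsq x) by nra.
have -> : (z.1 - x.1) ^+ 2 + (z.2 - x.2) ^+ 2 =
  z.1 ^+ 2 + z.2 ^+ 2 - 2 * (z.1 * x.1 + z.2 * x.2) + normsq x by rewrite /normsq; ring.
set rho := Num.sqrt (normsq x) in r0 r2 zx *; rewrite cz -r2; nra.
Qed.

Lemma grad_gap_pos (a b : v3) (x : pt) : a != b -> plane a x = plane b x ->
  0 < (a.1.2 - b.1.2) ^+ 2 + (a.2 - b.2) ^+ 2.
Proof.
move=> ab e; rewrite lt_def addr_ge0 ?sqr_ge0 // andbT paddr_eq0 ?sqr_ge0 //.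
rewrite !sqrf_eq0 !subr_eq0; apply: contraNN ab => /andP[/eqP e2 /eqP e3].
by apply/eqP/v3_eq => //; move: e; rewrite /plane e2 e3; lra.
Qed.

(** * Segments and their midpoints *)

Lemma v3comb_same (t : R) (p : v3) : v3comb t p p = p.
Proof. by apply: v3_eq; rewrite /v3comb /=; ring. Qed.

Lemma segment_same (p : v3) : segment p p = [set p].
Proof.
apply/seteqP; split=> [_ [t _ <-]|_ ->]; first by rewrite v3comb_same.
by exists 0; rewrite ?v3comb_same //= lexx ler01.
Qed.

Lemma segment_ends (p q : v3) : segment p q p /\ segment p q q.
Proof.
split; [exists 0 | exists 1]; rewrite /= ?lexx ?ler01 //;
  by apply: v3_eq; rewrite /v3comb /=; ring.
Qed.

(* The largest and the smallest value of an affine function on a segment are its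
   values at the endpoints, so their sum only depends on the segment as a set. *)
Lemma segment_endpoint_sum (f : v3 -> R) (p q p' q' : v3) :
  (forall t a b, f (v3comb t a b) = (1 - t) * f a + t * f b) ->
  segment p q = segment p' q' -> f p + f q = f p' + f q'.
Proof.
move=> hf e.
have within a b s : segment a b s -> Num.min (f a) (f b) <= f s <= Num.max (f a) (f b).
  case=> t /andP[t0 t1] <-; rewrite hf ge_min le_max.
  case: (lerP (f a) (f b)) => h; apply/andP; split; apply/orP;
    [left | right | right | left]; nra.
have [sp sq] := segment_ends p q; have [sp' sq'] := segment_ends p' q'.
rewrite e in sp sq; rewrite -e in sp' sq'.
have hmax : Num.max (f p) (f q) = Num.max (f p') (f q').
  apply/le_anti/andP; split; rewrite ge_max.
    by have /andP[_ ->] := within _ _ _ sp; have /andP[_ ->] := within _ _ _ sq.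
  by have /andP[_ ->] := within _ _ _ sp'; have /andP[_ ->] := within _ _ _ sq'.
have hmin : Num.min (f p) (f q) = Num.min (f p') (f q').
  apply/le_anti/andP; split; rewrite le_min.
    by have /andP[-> _] := within _ _ _ sp'; have /andP[-> _] := within _ _ _ sq'.
  by have /andP[-> _] := within _ _ _ sp; have /andP[-> _] := within _ _ _ sq.
by rewrite -addr_min_max hmin hmax addr_min_max.
Qed.

Lemma segment_midpoint_unique (p q p' q' : v3) :
  segment p q = segment p' q' -> v3comb 2^-1 p q = v3comb 2^-1 p' q'.
Proof.
move=> e.
have s1 := @segment_endpoint_sum (fun s : v3 => s.1.1) _ _ _ _ (fun _ _ _ => erefl) e.
have s2 := @segment_endpoint_sum (fun s : v3 => s.1.2) _ _ _ _ (fun _ _ _ => erefl) e.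
have s3 := @segment_endpoint_sum (fun s : v3 => s.2) _ _ _ _ (fun _ _ _ => erefl) e.
by apply: v3_eq; rewrite /v3comb /=; lra.
Qed.

Lemma midpt_segment (S : set v3) (p q : v3) : S = segment p q -> midpt S = v3comb 2^-1 p q.
Proof.
move=> hS; rewrite /midpt /=; set X := xget _ _.
have : S = segment X.1 X.2.
  by apply: (@xgetPex _ _ [set p : v3 * v3 | S = segment p.1 p.2]); exists (p, q).
by rewrite hS => /segment_midpoint_unique.
Qed.

Lemma midpt_in (S : set v3) (p q : v3) : S = segment p q -> S (midpt S).
Proof.
move=> hS; rewrite (midpt_segment hS) hS; exists 2^-1 => //.
by apply/andP; split; [rewrite invr_ge0 | rewrite invf_le1 // ler1n].
Qed.

Lemma midpt_set1 (s : v3) : midpt [set s] = s.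
Proof. by rewrite (midpt_segment (esym (segment_same s))) v3comb_same. Qed.

Lemma v3combN (t : R) (p q : v3) : v3comb t (- p) (- q) = - v3comb t p q.
Proof. by apply: v3_eq; rewrite /v3comb /=; ring. Qed.

Lemma segmentN (p q : v3) : [set s | segment p q (- s)] = segment (- p) (- q).
Proof.
apply/seteqP; split=> s /= [t ht e]; exists t => //; first by rewrite v3combN e opprK.
by rewrite -e v3combN opprK.
Qed.

Lemma midptN (S : set v3) : midpt [set s | S (- s)] = - midpt S.
Proof.
have [[p [q hS]]|nS] := pselect (exists p q, S = segment p q).
  by rewrite (midpt_segment hS) (midpt_segment (p := - p) (q := - q)) ?v3combN // hS segmentN.
have nS' : ~ exists p q, [set s | S (- s)] = segment p q.
  move=> [p [q h]]; apply: nS; exists (- p), (- q); rewrite -segmentN -h.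
  by apply/seteqP; split => s /=; rewrite opprK.
rewrite /midpt /= !xgetPN.
- by apply: v3_eq; rewrite /v3comb /= !mulr0 !addr0 oppr0.
- by move=> [p q] /= h; apply: nS; exists p, q.
- by move=> [p q] /= h; apply: nS'; exists p, q.
Qed.

(** * Affine minorants and support planes *)

Section Minorants.
Variables (g : pt -> R) (M : R).
Hypothesis g_bound : forall z, circle z -> `|g z| <= M.

Definition minorants : set v3 := [set s | forall z, circle z -> plane s z <= g z].

Let circle10 : circle ((1, 0) : pt).
Proof. by rewrite /circle /=; ring. Qed.

Let g_le z : circle z -> g z <= M.
Proof. by move=> cz; rewrite (le_trans (ler_norm _)) ?g_bound. Qed.

Lemma bound_ge0 : 0 <= M.
Proof. exact: le_trans (g_bound circle10). Qed.

Lemma const_minorant : minorants (M, 0, 0).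
Proof.
move=> z cz; have := g_bound cz; rewrite ler_norml => /andP[h _].
by rewrite /plane /= !mulr0 !addr0.
Qed.

(* Evaluating a minorant at the unit vectors +-grad s / |grad s| of the circle. *)
Lemma minorant_slope_le (s : v3) : minorants s ->
  - s.1.1 + slope s <= M /\ - s.1.1 - slope s <= M.
Proof.
move=> hs; have N2 := slope_sqr s; have Nge0 := slope_ge0 s.
set N := slope s in N2 Nge0 *.
have [N0|Nn0] := eqVneq N 0.
  rewrite N0 expr0n /= in N2.
  have e1 : s.1.2 = 0 by apply/eqP; rewrite -sqrf_eq0; apply/eqP; nra.
  have e2 : s.2 = 0 by apply/eqP; rewrite -sqrf_eq0; apply/eqP; nra.
  have := hs _ circle10; rewrite /plane e1 e2 !mulr0 !addr0 => h.
  by rewrite N0 subr0 addr0; split; apply: le_trans h (g_le circle10).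
have cz (e : R) : e ^+ 2 = 1 -> circle ((e * (s.1.2 / N), e * (s.2 / N)) : pt).
  move=> e2; rewrite /circle /= !exprMn e2 !mul1r -mulrDl -N2.
  by rewrite -exprMn divff // expr1n.
have pl (e : R) : plane s (e * (s.1.2 / N), e * (s.2 / N)) = - s.1.1 + e * N.
  by rewrite /plane /= -[in RHS](mulfK Nn0 N) -expr2 N2; field.
have le_M (e : R) : e ^+ 2 = 1 -> - s.1.1 + e * N <= M.
  by move=> e2; rewrite -pl; apply: le_trans (hs _ (cz e e2)) (g_le (cz e e2)).
by split; [rewrite -[N]mul1r | rewrite -[- N]mulN1r]; apply: le_M; rewrite ?sqrrN expr1n.
Qed.

Lemma minorant_le (s : v3) (x : pt) : minorants s -> normsq x <= 1 -> plane s x <= M.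
Proof.
move=> hs hx; have [h _] := minorant_slope_le hs.
by have := dot_le_slope1 s hx; rewrite /plane; lra.
Qed.

Lemma phi_minusE (x : pt) : phi_minus g x = sup [set plane s x | s in minorants].
Proof.
rewrite /phi_minus; congr sup; apply/seteqP; split.
- move=> _ [a [[c [b1 [b2 ->]]] Ha] <-]; exists (- c, b1, b2).
    by move=> z cz; have := Ha z cz; rewrite /plane /= opprK (mulrC z.1) (mulrC z.2).
  by rewrite /plane /= opprK (mulrC x.1) (mulrC x.2).
- move=> _ [s Hs <-]; exists (fun xi => - s.1.1 + s.1.2 * xi.1 + s.2 * xi.2).
    split; first by exists (- s.1.1), s.1.2, s.2.
    by move=> z cz; have := Hs z cz; rewrite /plane (mulrC z.1) (mulrC z.2).
  by rewrite /plane (mulrC x.1) (mulrC x.2).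
Qed.

Lemma has_sup_planes (x : pt) : normsq x <= 1 -> has_sup [set plane s x | s in minorants].
Proof.
move=> hx; split; first by exists (plane (M, 0, 0) x), (M, 0, 0); first exact: const_minorant.
by exists M => _ [s hs <-]; exact: minorant_le hs hx.
Qed.

Lemma minorant_le_phi (s : v3) (x : pt) :
  minorants s -> normsq x <= 1 -> plane s x <= phi_minus g x.
Proof.
by move=> hs hx; rewrite phi_minusE; apply: (sup_upper_bound (has_sup_planes hx)); exists s.
Qed.

Lemma phi_minus_ge (x : pt) : normsq x <= 1 -> - M <= phi_minus g x.
Proof.
move=> hx; have := minorant_le_phi const_minorant hx.
by rewrite /plane /= !mulr0 !addr0.
Qed.

Lemma phi_minus_radial (z : pt) (r : R) : circle z -> 0 <= r <= 1 ->
  phi_minus g (r * z.1, r * z.2) <= r * g z + (1 - r) * M.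
Proof.
move=> cz /andP[r0 r1]; rewrite phi_minusE; apply: ge_sup.
  by exists (plane (M, 0, 0) (r * z.1, r * z.2)), (M, 0, 0); first exact: const_minorant.
move=> _ [s hs <-].
have -> : plane s (r * z.1, r * z.2) = r * plane s z + (1 - r) * plane s (0, 0).
  by rewrite /plane /=; ring.
have : plane s (0, 0) <= M by apply: (minorant_le hs); rewrite /normsq /= expr0n addr0.
by have := hs z cz; nra.
Qed.

(* A point of the circle where [s] exceeds [g] would contradict
   [phi_minus_radial] along the radius through it. *)
Lemma Sigma_minusP (x : pt) (s : v3) : disk x ->
  Sigma_minus g x s <-> minorants s /\ plane s x = phi_minus g x.
Proof.
move=> hx; rewrite /Sigma_minus /= mink_lift1; split=> -[H ->]; split=> //.
  move=> z cz; rewrite -subr_le0; apply: (@le0_of_scaled_le _ (M + s.1.1)).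
  move=> r /andP[r0 r1].
  have hd : disk (r * z.1, r * z.2).
    by move: cz; rewrite /disk /circle /= !exprMn -mulrDr => ->; nra.
  have := H _ hd; rewrite mink_lift1.
  have := phi_minus_radial cz (r := r); rewrite r0 ltW // => /(_ isT).
  have -> : plane s (r * z.1, r * z.2) = r * plane s z + (1 - r) * (- s.1.1).
    by rewrite /plane /=; ring.
  lra.
by move=> xi hxi; rewrite mink_lift1; apply: minorant_le_phi H (ltW hxi).
Qed.

Lemma closed_minorants : closed minorants.
Proof.
have -> : minorants = \bigcap_(z in @circle R) [set s | plane s z <= g z].
  by apply/seteqP; split => s hs z cz; exact: hs.
by apply: closed_bigI => z _; exact: closed_plane_le.
Qed.

Definition box_radius (M' r : R) : R := M + M' + 2 * (M + M') / (1 - r).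

(* By [minorant_slope_le], [slope s * (1 - sqrt (normsq x)) <= M + M']. *)
Lemma minorant_box (s : v3) (x : pt) (M' r : R) : minorants s -> normsq x <= r -> r < 1 ->
  0 <= M' -> - M' <= plane s x -> box (box_radius M' r) s.
Proof.
move=> hs hxr r1 M'0 hl; have [h1 h2] := minorant_slope_le hs; have M0 := bound_ge0.
have rho0 : 0 <= Num.sqrt (normsq x) := sqrtr_ge0 _.
have rho2 : Num.sqrt (normsq x) ^+ 2 = normsq x by rewrite sqr_sqrtr ?normsq_ge0.
have rho1 : Num.sqrt (normsq x) < 1 by rewrite -sqrtr1 ltr_sqrt //; lra.
have hd := dot_le_slope x s; have N0 := slope_ge0 s; have [c2 c3] := grad_le_slope s.
move: hl; rewrite /plane => hl.
have hN : slope s * (1 - r) <= 2 * (M + M') by nra.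
have {}hN : slope s <= 2 * (M + M') / (1 - r) by rewrite ler_pdivlMr; lra.
rewrite /box /box_radius /=; split; last by split; lra.
by rewrite ler_norml; apply/andP; split; nra.
Qed.

Lemma Sigma_minus_box (x : pt) (s : v3) (r : R) : disk x -> normsq x <= r -> r < 1 ->
  Sigma_minus g x s -> box (box_radius M r) s.
Proof.
move=> hx hxr r1 /(Sigma_minusP _ hx) [hs e].
apply: minorant_box hs hxr r1 bound_ge0 _; rewrite e.
by apply: phi_minus_ge; apply: ltW.
Qed.

(* The support plane is a maximiser of [plane ^~ x] over the compact set of
   minorants that are not too low at [x]. *)
Lemma Sigma_minus_nonempty (x : pt) : disk x -> exists s, Sigma_minus g x s.
Proof.
move=> hx; have hx1 := ltW hx; have M0 := bound_ge0.
set A := minorants `&` box (box_radius (M + 1) (normsq x)).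
have A_low s : minorants s -> - (M + 1) <= plane s x -> A s.
  by move=> hs hl; split => //; apply: minorant_box hs (lexx _) hx _ hl; lra.
have cA : compact A.
  by rewrite /A setIC; apply: compact_closedI; [exact: compact_box | exact: closed_minorants].
have [c /set_mem [cmin cbox] cmax] :
    exists2 c, c \in A & forall t, t \in A -> plane t x <= plane c x.
  apply: compact_EVT_max cA _.
    exists (M, 0, 0); apply: A_low; first exact: const_minorant.
    by rewrite /plane /= !mulr0 !addr0; lra.
  by apply: continuous_subspaceT => s; exact: continuous_plane.
exists c; apply/(Sigma_minusP _ hx); split => //.
apply/eqP; rewrite eq_le minorant_le_phi // phi_minusE; apply: ge_sup.
  by exists (plane c x), c.
move=> _ [s hs <-]; have [hl|hl] := lerP (- (M + 1)) (plane s x).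
  by apply: cmax; apply/mem_set; exact: A_low.
apply: le_trans (ltW hl) _; apply: le_trans (cmax (M, 0, 0) _).
  by rewrite /plane /= !mulr0 !addr0; lra.
apply/mem_set/A_low; first exact: const_minorant.
by rewrite /plane /= !mulr0 !addr0; lra.
Qed.

Lemma Sigma_minus_comb (x : pt) (a b : v3) (t : R) : disk x ->
  Sigma_minus g x a -> Sigma_minus g x b -> 0 <= t <= 1 ->
  Sigma_minus g x (v3comb t a b).
Proof.
move=> hx /(Sigma_minusP _ hx) [ha ea] /(Sigma_minusP _ hx) [hb eb] /andP[t0 t1].
apply/(Sigma_minusP _ hx); split; last by rewrite plane_comb ea eb; ring.
by move=> z cz; rewrite plane_comb; have := ha z cz; have := hb z cz; nra.
Qed.

(* Lifting the centroid of three minorants that agree at [x] by less than the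
   distance from [x] to the circle times the nondegeneracy of their gradients
   keeps it below [g], because on the circle one of the three planes is far
   above the centroid. *)
Lemma raised_centroid_minorant (x : pt) (s1 s2 s3 : v3) (de : R) :
  minorants s1 -> minorants s2 -> minorants s3 ->
  plane s2 x = plane s1 x -> plane s3 x = plane s1 x -> 0 < de ->
  de * (20 * (grad_spread s1 s2 s3 + 1)) <= `|grad_det s1 s2 s3| * (1 - Num.sqrt (normsq x)) ->
  minorants (raised_centroid s1 s2 s3 de).
Proof.
move=> h1 h2 h3 e2 e3 de0 hde z cz; rewrite leNgt; apply/negP => hz.
have below (s : v3) : minorants s ->
    plane s x + ((z.1 - x.1) * s.1.2 + (z.2 - x.2) * s.2) <
    (plane s1 z + plane s2 z + plane s3 z) / 3 + de.
  by move=> hs; rewrite -plane_shift -plane_raised_centroid (le_lt_trans (hs z cz)).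
have := below _ h1; have := below _ h2; have := below _ h3.
rewrite !(plane_shift _ x z) e2 e3 => b3 b2 b1.
have := @centroid_gap (s2.1.2 - s1.1.2) (s2.2 - s1.2) (s3.1.2 - s1.1.2) (s3.2 - s1.2)
  (z.1 - x.1) (z.2 - x.2) de.
rewrite -/(grad_det s1 s2 s3) -/(grad_spread s1 s2 s3).
set D := grad_det s1 s2 s3; set S := grad_spread s1 s2 s3.
move=> /(_ ltac:(lra) ltac:(lra) ltac:(lra)) gap.
have dist := circle_dist_ge x cz; have S0 : 0 <= S := grad_spread_ge0 s1 s2 s3.
set v2 := (z.1 - x.1) ^+ 2 + (z.2 - x.2) ^+ 2 in gap dist.
set rho := Num.sqrt (normsq x) in hde dist.
have k1 : (de * (20 * (S + 1))) ^+ 2 <= D ^+ 2 * (1 - rho) ^+ 2.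
  have A0 : 0 <= de * (20 * (S + 1)) by apply: mulr_ge0; lra.
  rewrite -(real_normK (num_real D)) -exprMn lerXn2r // nnegrE //.
  exact: le_trans hde.
have k2 : D ^+ 2 * (1 - rho) ^+ 2 <= D ^+ 2 * v2 by rewrite ler_wpM2l ?sqr_ge0.
have de2 : 0 < de ^+ 2 by rewrite exprn_gt0.
nra.
Qed.

Lemma Sigma_minus_grad_collinear (x : pt) (s1 s2 s3 : v3) : disk x ->
  Sigma_minus g x s1 -> Sigma_minus g x s2 -> Sigma_minus g x s3 ->
  grad_det s1 s2 s3 = 0.
Proof.
move=> hx /(Sigma_minusP _ hx) [h1 e1] /(Sigma_minusP _ hx) [h2 e2]
  /(Sigma_minusP _ hx) [h3 e3].
apply/eqP; apply: contraT => hD.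
have r1 : Num.sqrt (normsq x) < 1 by rewrite -sqrtr1 ltr_sqrt.
have S1 : 0 < 20 * (grad_spread s1 s2 s3 + 1) by have := grad_spread_ge0 s1 s2 s3; lra.
set de := `|grad_det s1 s2 s3| * (1 - Num.sqrt (normsq x)) / (20 * (grad_spread s1 s2 s3 + 1)).
have de0 : 0 < de by rewrite divr_gt0 // mulr_gt0 ?normr_gt0 // subr_gt0.
have hA : minorants (raised_centroid s1 s2 s3 de).
  apply: (raised_centroid_minorant (x := x)) h1 h2 h3 _ _ de0 _; rewrite ?e1 ?e2 ?e3 //.
  by rewrite /de mulfVK ?gt_eqF.
have := minorant_le_phi hA (ltW hx); rewrite plane_raised_centroid e1 e2 e3; lra.
Qed.

Lemma minorant_line_bounded (x : pt) (s d : v3) : disk x -> Sigma_minus g x s ->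
  plane d x = 0 -> 0 < d.1.2 ^+ 2 + d.2 ^+ 2 ->
  exists B, forall t, minorants (v3line s d t) -> t <= B.
Proof.
move=> hx /(Sigma_minusP _ hx) [_ es] hd hq; have phi_ge := phi_minus_ge (ltW hx).
set K := box_radius M (normsq x); set q := d.1.2 ^+ 2 + d.2 ^+ 2 in hq.
exists ((`|d.1.2| * K + `|d.2| * K + `|d.1.2| * `|s.1.2| + `|d.2| * `|s.2|) / q) => t ht.
have [_ [b1 b2]] : box K (v3line s d t).
  apply: minorant_box ht (lexx _) hx bound_ge0 _.
  by rewrite plane_line hd mulr0 addr0 es.
have k1 := mulr_le_norm d.1.2 b1; have k2 := mulr_le_norm d.2 b2.
have k3 := mulr_le_norm (- d.1.2) (lexx `|s.1.2|).
have k4 := mulr_le_norm (- d.2) (lexx `|s.2|).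
rewrite !normrN in k3 k4; rewrite ler_pdivlMr //.
have -> : t * q = d.1.2 * (s.1.2 + t * d.1.2) + d.2 * (s.2 + t * d.2)
   - (d.1.2 * s.1.2) - (d.2 * s.2) by rewrite /q; ring.
rewrite /v3line /= in k1 k2; lra.
Qed.

(* Each constraint [plane (v3line s d t) z <= g z] is affine in [t], so the set of
   admissible [t] is an interval containing its supremum. *)
Lemma minorant_line_max (s d : v3) (B : R) : minorants s ->
  (forall t, minorants (v3line s d t) -> t <= B) ->
  exists2 t1, 0 <= t1 /\ minorants (v3line s d t1) &
    forall t, minorants (v3line s d t) -> t <= t1.
Proof.
move=> hs hB; set T := [set t | minorants (v3line s d t)].
have T0 : T 0 by move=> z cz; rewrite plane_line mul0r addr0; exact: hs.
have supT : has_sup T by split; [exists 0 | exists B => t; exact: hB].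
exists (sup T); last by move=> t; exact: sup_upper_bound.
have sup0 : 0 <= sup T by exact: sup_upper_bound.
split=> // z cz; rewrite plane_line; have := hs z cz.
have [dz0|dz0] := ltP 0 (plane d z); last first.
  have : sup T * plane d z <= 0 by rewrite mulr_ge0_le0.
  lra.
have : sup T <= (g z - plane s z) / plane d z.
  apply: ge_sup; first by exists 0.
  move=> t /(_ z cz); rewrite plane_line ler_pdivlMr // => h; lra.
by rewrite ler_pdivlMr //; lra.
Qed.

Lemma Sigma_minus_on_line (x : pt) (s1 s2 s : v3) : disk x ->
  Sigma_minus g x s1 -> Sigma_minus g x s2 -> Sigma_minus g x s ->
  0 < (s2 - s1).1.2 ^+ 2 + (s2 - s1).2 ^+ 2 ->
  s = v3line s1 (s2 - s1) (((s2 - s1).1.2 * (s.1.2 - s1.1.2) + (s2 - s1).2 * (s.2 - s1.2))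
                           / ((s2 - s1).1.2 ^+ 2 + (s2 - s1).2 ^+ 2)).
Proof.
move=> hx h1 h2 hs; have hdet := Sigma_minus_grad_collinear hx h1 h2 hs.
have [_ e1] := (Sigma_minusP _ hx).1 h1; have [_ e2] := (Sigma_minusP _ hx).1 h2.
have [_ e] := (Sigma_minusP _ hx).1 hs.
rewrite /grad_det in hdet; rewrite /=; set q := _ + _ => q0.
set t := _ / q.
have tq : t * q = (s2.1.2 - s1.1.2) * (s.1.2 - s1.1.2) + (s2.2 - s1.2) * (s.2 - s1.2).
  by rewrite /t mulfVK ?gt_eqF.
have et1 : s.1.2 = s1.1.2 + t * (s2.1.2 - s1.1.2).
  apply: (mulIf (lt0r_neq0 q0)); rewrite mulrDl [_ * _ * q]mulrAC tq /q.
  apply/eqP; rewrite -subr_eq0; apply/eqP.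
  by transitivity (- (s2.2 - s1.2) * 0); [rewrite -hdet; ring | rewrite mulr0].
have et2 : s.2 = s1.2 + t * (s2.2 - s1.2).
  apply: (mulIf (lt0r_neq0 q0)); rewrite mulrDl [_ * _ * q]mulrAC tq /q.
  apply/eqP; rewrite -subr_eq0; apply/eqP.
  by transitivity ((s2.1.2 - s1.1.2) * 0); [rewrite -hdet; ring | rewrite mulr0].
apply: v3_eq => //=; move: e; rewrite -e1 /plane et1 et2.
have : plane s2 x = plane s1 x by rewrite e1 e2.
rewrite /plane; nra.
Qed.

Lemma Sigma_minus_segment (x : pt) : disk x -> exists p q, Sigma_minus g x = segment p q.
Proof.
move=> hx; have [s1 hs1] := Sigma_minus_nonempty hx.
have [[s2 [hs2 ne]]|single] := pselect (exists s2, Sigma_minus g x s2 /\ s2 <> s1); last first.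
  exists s1, s1; rewrite segment_same; apply/seteqP; split=> [s hs|_ ->] //.
  by apply: contrapT => ne; apply: single; exists s.
have [m1 e1] := (Sigma_minusP _ hx).1 hs1; have [m2 e2] := (Sigma_minusP _ hx).1 hs2.
set d := s2 - s1; have hd : plane d x = 0 by rewrite planeB e1 e2 subrr.
have q0 : 0 < d.1.2 ^+ 2 + d.2 ^+ 2.
  by apply: (grad_gap_pos (x := x) (introN eqP ne)); rewrite e1 e2.
have hnd : plane (- d) x = 0 by rewrite planeN hd oppr0.
have [B1 hB1] := minorant_line_bounded hx hs1 hd q0.
have [B2 hB2] : exists B, forall t, minorants (v3line s1 (- d) t) -> t <= B.
  by apply: minorant_line_bounded hx hs1 hnd _; rewrite /= !sqrrN.
have [t1 [t10 P1] t1max] := minorant_line_max m1 hB1.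
have [t2 [t20 Q1] t2max] := minorant_line_max m1 hB2.
have onS t (u : v3) :
    minorants (v3line s1 u t) -> plane u x = 0 -> Sigma_minus g x (v3line s1 u t).
  by move=> hm hu; apply/(Sigma_minusP _ hx); rewrite plane_line hu mulr0 addr0.
have s2_on_line : v3line s1 d 1 = s2 by apply: v3_eq => /=; ring.
have t11 : 1 <= t1 by apply: t1max; rewrite s2_on_line.
exists (v3line s1 d t1), (v3line s1 (- d) t2); apply/seteqP; split; last first.
  by move=> _ [u hu <-]; apply: Sigma_minus_comb hx (onS _ _ P1 hd) (onS _ _ Q1 hnd) hu.
move=> s hs; have := Sigma_minus_on_line hx hs1 hs2 hs q0; rewrite -/d.
set t := _ / _ => st; have [ms _] := (Sigma_minusP _ hx).1 hs.
have tle1 : t <= t1 by apply: t1max; rewrite -st.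
have tle2 : - t <= t2.
  have lineN : v3line s1 (- d) (- t) = s by rewrite st; apply: v3_eq => /=; ring.
  by apply: t2max; rewrite lineN.
exists ((t1 - t) / (t1 + t2)).
  by apply/andP; split; [apply: divr_ge0 | rewrite ler_pdivrMr ?mul1r]; lra.
have t12 : t1 + t2 != 0 by apply: lt0r_neq0; lra.
by rewrite st; apply: v3_eq => /=; field.
Qed.

(** * Continuity of [E_minus] *)

Lemma sigma_minus_in (x : pt) : disk x -> Sigma_minus g x (sigma_minus g x).
Proof. by move=> hx; have [p [q h]] := Sigma_minus_segment hx; exact: midpt_in h. Qed.

Lemma phi_minus_increment (x y : pt) (a b : v3) : disk x -> disk y ->
  Sigma_minus g x a -> Sigma_minus g y b ->
  plane a y - plane a x <= phi_minus g y - phi_minus g x <= plane b y - plane b x.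
Proof.
move=> hx hy /(Sigma_minusP _ hx) [ma ea] /(Sigma_minusP _ hy) [mb eb].
have := minorant_le_phi ma (ltW hy); have := minorant_le_phi mb (ltW hx).
by rewrite ea eb => *; apply/andP; split; lra.
Qed.

Lemma Sigma_minus_plane_lower (x y : pt) (s0 s : v3) (K : R) : disk x -> disk y ->
  Sigma_minus g x s0 -> Sigma_minus g y s -> box K s0 -> box K s ->
  phi_minus g x - 2 * K * (`|y.1 - x.1| + `|y.2 - x.2|) <= plane s x.
Proof.
move=> hx hy h0 h B0 B; have /andP[inc _] := phi_minus_increment hx hy h0 h.
have [_ ey] := (Sigma_minusP _ hy).1 h.
have := plane_diff_le_box x y B0; have := plane_diff_le_box x y B.
by rewrite !ler_norml => /andP[? ?] /andP[? ?]; lra.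
Qed.

Lemma sigma_minus_near (eta : pt) : disk eta -> exists K : R,
  (forall s, Sigma_minus g eta s -> box K s) /\
  \forall xi \near eta, disk xi /\ box K (sigma_minus g xi).
Proof.
move=> he; have he' : normsq eta < 1 := he; set r := (1 + normsq eta) / 2.
have r1 : r < 1 by rewrite /r; lra.
exists (box_radius M r); split=> [s|]; first by apply: Sigma_minus_box; rewrite // /r; lra.
have : \forall xi \near eta, normsq xi < r.
  by apply: (cvgr_lt _ (@continuous_normsq eta)); rewrite /r; lra.
apply: filterS => xi hxi; have hx : disk xi := lt_trans hxi r1.
by split=> //; apply: Sigma_minus_box hx (ltW hxi) r1 (sigma_minus_in hx).
Qed.

Lemma sigma_minus_cluster (eta : pt) (p : v3) : disk eta ->
  cluster (sigma_minus g @ eta) p -> Sigma_minus g eta p.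
Proof.
move=> he hp; have [K [BK near]] := sigma_minus_near he.
have [s0 hs0] := Sigma_minus_nonempty he.
have mp : minorants p.
  apply: cluster_closed_in hp _ closed_minorants.
  by apply: filterS near => xi [hxi _]; have [] := (Sigma_minusP _ hxi).1 (sigma_minus_in hxi).
apply/(Sigma_minusP _ he); split=> //; apply/le_anti/andP; split.
  exact: minorant_le_phi mp (ltW he).
apply/ler_addgt0Pr => e e0; rewrite -lerBlDr.
apply: (cluster_closed_in (A := [set s | phi_minus g eta - e <= plane s eta]) hp);
  last exact: closed_plane_ge.
apply: filterS (filterI near (near_dist1_lt eta (2 * K) e0)) => xi [[hxi Bxi] hd] /=.
have := Sigma_minus_plane_lower he hxi hs0 (sigma_minus_in hxi) (BK _ hs0) Bxi; lra.
Qed.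

Lemma E_minus_continuous_of_set1 (eta : pt) (s0 : v3) : disk eta ->
  Sigma_minus g eta = [set s0] -> {for eta, continuous (E_minus g)}.
Proof.
move=> he hS; have [K [_ near]] := sigma_minus_near he.
have sg_cvg : sigma_minus g @ eta --> s0.
  apply: (cvg_box_cluster (K := K)); first by apply: filterS near => ? [].
  by move=> p /(sigma_minus_cluster he); rewrite hS.
have sg_eta : sigma_minus g eta = s0 by rewrite /sigma_minus hS midpt_set1.
have := cvg_dPi_mcross (u := id) (F := nbhs eta) (FF := nbhs_filter eta) (x := eta)
  cvg_id sg_cvg.
by rewrite -sg_eta.
Qed.

Definition cross_slope (eta : pt) (a : v3) (n1 n2 : R) (y : pt) : R :=
  n1 * (E_minus g y).2 - n2 * (E_minus g y).1
  - phi_minus g eta * (n1 * y.1 + n2 * y.2) - (1 - normsq y) * (n1 * a.1.2 + n2 * a.2).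

Lemma continuous_cross_slope (eta : pt) (a : v3) (n1 n2 : R) :
  {for eta, continuous (E_minus g)} -> {for eta, continuous (cross_slope eta a n1 n2)}.
Proof.
move=> hc; have cE1 := cvg_comp _ _ hc (@continuous_pt_1 (E_minus g eta)).
have cE2 := cvg_comp _ _ hc (@continuous_pt_2 (E_minus g eta)).
rewrite /continuous_at /cross_slope.
by repeat first [exact: cE1 | exact: cE2 | exact: continuous_normsq | exact: cvg_cst
  | exact: continuous_pt_1 | exact: continuous_pt_2
  | apply: cvgB | apply: cvgD | apply: cvgM].
Qed.

Lemma cross_slope_mid (eta : pt) (a b : v3) : disk eta -> Sigma_minus g eta = segment a b ->
  cross_slope eta a (a.1.2 - b.1.2) (a.2 - b.2) eta =
  - ((1 - normsq eta) * (((a.1.2 - b.1.2) ^+ 2 + (a.2 - b.2) ^+ 2) / 2)).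
Proof.
move=> he hS; have [Sa Sb] := segment_ends a b; rewrite -hS in Sa Sb.
have [_ ea] := (Sigma_minusP _ he).1 Sa; have [_ eb] := (Sigma_minusP _ he).1 Sb.
rewrite /cross_slope /E_minus /sigma_minus (midpt_segment hS) dPi_mcross_cross.
by rewrite plane_comb ea eb /v3comb /=; field.
Qed.

(* Moving from [eta] to [xi] in direction [n] can only increase the slope of the
   support plane along [n] ([phi_minus_increment]), while [phi_minus] changes by
   [O(s)]. *)
Lemma cross_slope_ge (eta xi : pt) (a : v3) (n1 n2 s K : R) :
  xi = (eta.1 + s * n1, eta.2 + s * n2) -> 0 < s -> disk eta -> disk xi ->
  Sigma_minus g eta a -> box K a -> box K (sigma_minus g xi) ->
  - (s * ((`|n1| + `|n2|) * K) * `|n1 * xi.1 + n2 * xi.2|) <= cross_slope eta a n1 n2 xi.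
Proof.
move=> exi s0 he hx ha Ba Bs; have hs := sigma_minus_in hx.
have [_ es] := (Sigma_minusP _ hx).1 hs.
have /andP[lo hi] := phi_minus_increment he hx ha hs.
rewrite /cross_slope /E_minus dPi_mcross_cross es.
set sg := sigma_minus g xi in Bs hs es lo hi *.
have incr (t : v3) : plane t xi - plane t eta = s * (n1 * t.1.2 + n2 * t.2).
  by rewrite exi /plane /=; ring.
rewrite !incr in lo hi.
have := box_dot_le n1 n2 Ba; have := box_dot_le n1 n2 Bs.
set Ga := n1 * a.1.2 + n2 * a.2 in lo *; set Gs := n1 * sg.1.2 + n2 * sg.2 in hi *.
set Gb := (`|n1| + `|n2|) * K; set D := phi_minus g xi - phi_minus g eta in lo hi *.
rewrite !ler_norml => /andP[Gs1 Gs2] /andP[Ga1 Ga2].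
have GaGs : Ga <= Gs by rewrite -(ler_pM2l s0); lra.
have sq : 0 <= 1 - normsq xi by have : normsq xi < 1 := hx; lra.
have Dle : `|D| <= s * Gb.
  have lo' : s * (- Gb) <= s * Ga by rewrite ler_pM2l.
  have hi' : s * Gs <= s * Gb by rewrite ler_pM2l.
  by rewrite ler_norml; apply/andP; split; lra.
have := mulr_le_norm (- D) (lexx `|n1 * xi.1 + n2 * xi.2|); rewrite normrN.
have := ler_wpM2r (normr_ge0 (n1 * xi.1 + n2 * xi.2)) Dle.
have : 0 <= (1 - normsq xi) * (Gs - Ga) by apply: mulr_ge0; lra.
rewrite /D; nra.
Qed.

(* If [Sigma_minus g eta] is a proper segment [a b], [cross_slope] along
   [n = grad a - grad b] jumps up when leaving [eta] in direction [n]. *)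
Lemma set1_of_E_minus_continuous (eta : pt) : disk eta ->
  {for eta, continuous (E_minus g)} -> exists s, Sigma_minus g eta = [set s].
Proof.
move=> he hc; have [a [b hS]] := Sigma_minus_segment he.
have [eab|ab] := eqVneq a b; first by exists a; rewrite hS -eab segment_same.
have [Sa Sb] := segment_ends a b; rewrite -hS in Sa Sb.
have [_ ea] := (Sigma_minusP _ he).1 Sa; have [_ eb] := (Sigma_minusP _ he).1 Sb.
have mid := cross_slope_mid he hS; have nn0 := grad_gap_pos ab (etrans ea (esym eb)).
set n1 := a.1.2 - b.1.2 in mid nn0; set n2 := a.2 - b.2 in mid nn0.
have [K [BK near]] := sigma_minus_near he; set Gb := (`|n1| + `|n2|) * K.
set xi := fun s : R => ((eta.1 + s * n1, eta.2 + s * n2) : pt).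
have cxi : xi @ (0 : R) --> eta := @cvg_line eta n1 n2.
set h := fun s : R =>
  cross_slope eta a n1 n2 (xi s) + s * Gb * `|n1 * (xi s).1 + n2 * (xi s).2|.
have ch : h @ (0 : R)^'+ --> cross_slope eta a n1 n2 eta + 0 * Gb * `|n1 * eta.1 + n2 * eta.2|.
  apply: cvg_within_filter; apply: cvgD.
    exact: cvg_comp cxi (@continuous_cross_slope eta a n1 n2 hc).
  apply: cvgM; first by apply: cvgMr_tmp; exact: cvg_id.
  by apply: cvg_norm; apply: cvgD; apply: cvgMl_tmp; apply: (cvg_comp _ _ cxi);
    [exact: continuous_pt_1 | exact: continuous_pt_2].
have pos : \forall s \near (0 : R)^'+, 0 < s /\ disk (xi s) /\ box K (sigma_minus g (xi s)).
  by apply: filterI (nbhs_right_gt 0) _; apply: cvg_within; exact: cxi _ near.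
have : 0 <= cross_slope eta a n1 n2 eta + 0 * Gb * `|n1 * eta.1 + n2 * eta.2|.
  apply: (cvgr_to_ge ch); apply: filterS pos => s [s0 [hxs Bs]].
  by have := cross_slope_ge erefl s0 he hxs Sa (BK _ Sa) Bs; rewrite /h -/Gb; lra.
have : 0 < (1 - normsq eta) * ((n1 ^+ 2 + n2 ^+ 2) / 2).
  by apply: mulr_gt0; [rewrite subr_gt0 | apply: divr_gt0].
by rewrite !mul0r addr0 mid; lra.
Qed.

Lemma E_minus_continuousP (eta : pt) : disk eta ->
  {for eta, continuous (E_minus g)} <-> exists s, Sigma_minus g eta = [set s].
Proof.
move=> he; split; first exact: set1_of_E_minus_continuous.
by case=> s0; exact: E_minus_continuous_of_set1.
Qed.

End Minorants.

(** * The upper envelope, and the bound on [phi] *)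

Lemma phi_plusE (g : pt -> R) (x : pt) : phi_plus g x = - phi_minus (fun z => - g z) x.
Proof.
rewrite /phi_plus /inf /phi_minus; congr (- sup _); apply/seteqP; split.
- move=> _ [_ [a [[c [b1 [b2 ->]]] Ha] <-] <-].
  exists (fun xi => - c + - b1 * xi.1 + - b2 * xi.2); last by rewrite /=; ring.
  by split; [exists (- c), (- b1), (- b2) | move=> z /Ha; lra].
- move=> _ [a [[c [b1 [b2 ->]]] Ha] <-].
  exists (- c + - b1 * x.1 + - b2 * x.2); last by ring.
  exists (fun xi => - c + - b1 * xi.1 + - b2 * xi.2) => //.
  by split; [exists (- c), (- b1), (- b2) | move=> z /Ha; lra].
Qed.

Lemma Sigma_plusE (g : pt -> R) (x : pt) :
  Sigma_plus g x = [set s | Sigma_minus (fun z => - g z) x (- s)].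
Proof.
apply/seteqP; split=> s; rewrite /Sigma_plus /Sigma_minus /= !mink_lift1 planeN phi_plusE.
- move=> [H ->]; rewrite opprK; split=> // xi /H; rewrite !mink_lift1 planeN phi_plusE; lra.
- move=> [H e]; rewrite -e opprK; split=> // xi /H; rewrite !mink_lift1 planeN phi_plusE; lra.
Qed.

Lemma E_plusE (g : pt -> R) (x : pt) : E_plus g x = - E_minus (fun z => - g z) x.
Proof.
rewrite /E_plus /sigma_plus Sigma_plusE midptN /E_minus /sigma_minus.
by rewrite dPi_mcrossN.
Qed.

Lemma E_plus_continuousP (g : pt -> R) (M : R) (eta : pt) :
  (forall z, circle z -> `|g z| <= M) -> disk eta ->
  {for eta, continuous (E_plus g)} <-> exists s, Sigma_plus g eta = [set s].
Proof.
move=> hM he; have hM' z : circle z -> `|- g z| <= M by rewrite normrN; exact: hM.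
have -> : E_plus g = - E_minus (fun z => - g z) by apply: funext => x; rewrite E_plusE.
have -> : {for eta, continuous (- E_minus (fun z => - g z))} <->
    {for eta, continuous (E_minus (fun z => - g z))}.
  exact: cvgNP.
rewrite (E_minus_continuousP hM' he); split=> -[s hs]; exists (- s).
  by rewrite Sigma_plusE hs; apply/seteqP; split=> t /=; [move=> <-|move=> ->]; rewrite opprK.
apply/seteqP; split=> t /=.
  move=> ht; have : Sigma_plus g eta (- t) by rewrite Sigma_plusE /= opprK.
  by rewrite hs /= => <-; rewrite opprK.
move=> ->; have : Sigma_plus g eta s by rewrite hs.
by rewrite Sigma_plusE.
Qed.

Lemma circle_norm_le1 (z : pt) : circle z -> `|z.1| <= 1 /\ `|z.2| <= 1.
Proof.
rewrite /circle /= => cz; have := sqr_ge0 z.1; have := sqr_ge0 z.2.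
by split; rewrite -(ler_pXn2r (n := 2)) ?nnegrE ?expr1n ?real_normK ?num_real //; lra.
Qed.

Lemma compact_circle : compact (@circle R).
Proof.
apply: (subclosed_compact _
  (compact_setX (@segment_compact R (-1) 1) (@segment_compact R (-1) 1))).
  have -> : @circle R = normsq @^-1` [set 1] by [].
  by apply: preimage_closed (@closed_eq _ 1) => x _; exact: continuous_normsq.
move=> z /circle_norm_le1 [z1 z2] /=; rewrite !in_itv /=.
by rewrite -!ler_norml z1 z2.
Qed.

(* On the circle, [phi] is recovered from [X] as [det (z, X z)]. *)
Lemma support_function_bounded (X : pt -> pt) (phi : pt -> R) :
  {within @circle R, continuous X} -> is_support_function X phi ->
  exists M, forall z, circle z -> `|phi z| <= M.
Proof.
move=> hX hphi; have := compact_bounded (continuous_compact hX compact_circle).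
move=> [B [_ /(_ (B + 1) ltac:(lra)) hB]]; exists (2 * (B + 1)) => z cz.
have : `|X z| <= B + 1 by apply: hB; exists z.
have -> : `|X z| = Num.max `|(X z).1| `|(X z).2| by [].
rewrite ge_max => /andP[x1 x2].
have -> : phi z = z.1 * (X z).2 - z.2 * (X z).1.
  rewrite (hphi z cz) /=; move: cz; rewrite /circle /= => cz.
  by rewrite -[LHS]mul1r -cz; ring.
have [z1 z2] := circle_norm_le1 cz.
rewrite (le_trans (ler_normB _ _)) // !normrM.
have := ler_pM (normr_ge0 _) (normr_ge0 _) z1 x2.
have := ler_pM (normr_ge0 _) (normr_ge0 _) z2 x1.
lra.
Qed.

End SupportPlanes.

Theorem lemma4p11 (R : realType) (X : (R * R) -> (R * R)) (phi : (R * R) -> R)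
  (hX : {within @circle R, continuous X})
  (hphi : is_support_function X phi)
  (eta : (R * R)) (heta : disk eta) :
  ({for eta, continuous (@E_minus R phi)} <-> exists s, Sigma_minus phi eta = [set s])
  /\
  ({for eta, continuous (@E_plus R phi)} <-> exists s, Sigma_plus phi eta = [set s]).
Proof.
have [M hM] := support_function_bounded hX hphi.
split; [exact (E_minus_continuousP hM heta) | exact (E_plus_continuousP hM heta)].
Qed.
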